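(* In the perceptive model, the neighbors discovery task can be solved deterministically in $O(\log N)$ rounds.
   Context: Model (perceptive): $n>4$ agents are at distinct, arbitrary initial positions on a circle of circumference $1$ and act in synchronised unit-time rounds. Each agent has its own notion of right (clockwise) and left; these need not be consistent across agents. At the start of each round every agent $a$ chooses $\mathrm{dir}_a\in\{\text{right},\text{left}\}$ and moves at unit speed. Agents never pass: two colliding agents instantly reverse direction. There is no communication. At the end of each round every agent learns two values, both measured relative to its start-of-round position and in its own orientation: - the clockwise distance to its end-of-round position; - the distance to its first collision in that round. Agents have distinct IDs in $\{1,\dots,N\}$ with $N\ge n$ known. For an agent $a$, $\mathrm{Left}(a)$ and $\mathrm{Right}(a)$ denote its immediate neighbours on the ring in its left and right directions (by its own orientation). Neighbors discovery task: each agent $a$ must - learn the positions of $\mathrm{Left}(a)$ and $\mathrm{Right}(a)$ relative to its own initial position, and - determine whether $\mathrm{Left}(a)$ and $\mathrm{Right}(a)$ have the same sense of direction as $a$. *)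

From Stdlib Require Import Reals.
From mathcomp Require Import all_boot.

Set Implicit Arguments.
Unset Strict Implicit.
Unset Printing Implicit Defensive.

(* Perceptive model of agents on a circle of circumference 1.               *)
(* Agents are named by their clockwise rank 0..n-1 of the initial           *)
(* configuration: agent k starts at position x k, with                      *)
(* 0 <= x 0 < x 1 < ... < x (n-1) < 1 (every configuration of n distinct    *)
(* points arises this way, since the naming carries no information:         *)
(* IDs and orientations are arbitrary functions of k).                      *)
(* o k = true  iff agent k's "right" is the global clockwise direction.     *)

Definition cwdist (a b : R) : R := frac_part (b - a).

(* an observation at the end of a round:
   (clockwise distance, in the agent's own orientation, from its start-of-round
    position to its end-of-round position ;
    distance to its first collision in the round, None if it has no collision) *)
Definition obs := (R * option R)%type.

(* A deterministic algorithm (the same code for all agents; it may depend on N,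
   see the theorem). [choose id h] : direction for the next round (true = right,
   false = left) of the agent with ID [id] whose observation history so far is
   [h]. [output id h] = (distance from its initial position to Right(a) going
   right, distance from its initial position to Left(a) going left,
   Right(a) has the same sense of direction, Left(a) has the same sense). *)
Record algorithm := Algorithm {
  choose : nat -> seq obs -> bool;
  output : nat -> seq obs -> (R * R * bool * bool)
}.

Definition minR (s : seq R) : option R :=
  match s with
  | [::] => None
  | g :: gs => Some (foldr Rmin g gs)
  end.

(* State after some rounds: (s, h) where agent k currently sits at the
   initial position of rank (k + s) %% n (the set of occupied positions is
   invariant, since every agent covers length 1 per round and agents never
   pass each other), and h k is agent k's observation history (oldest first). *)
Fixpoint run (A : algorithm) (n : nat) (x : nat -> R) (o : nat -> bool)
    (id : nat -> nat) (r : nat) : nat * (nat -> seq obs) :=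
  match r with
  | 0 => (0, fun _ => [::])
  | r'.+1 =>
    let: (s, h) := run A n x o id r' in
    (* global direction of agent k: clockwise iff chosen direction = own right
       direction matches orientation *)
    let cw k := choose A (id k) (h k) == o k in
    let pos k := (k + s) %% n in
    (* rank shift of the round: (#clockwise - #counterclockwise) mod n *)
    let m := (count cw (iota 0 n) + (n - count (fun k => ~~ cw k) (iota 0 n))) %% n in
    let fb k :=
      let p := pos k in
      let q := (p + m) %% n in
      (* end position, measured clockwise in the agent's own orientation *)
      let dend := if o k then cwdist (x p) (x q) else cwdist (x q) (x p) in
      (* first collision: with the nearest agent moving in the opposite
         direction, ahead in the direction of motion, met at half the gap *)
      let gaps := [seq (if cw k then cwdist (x p) (x (pos j))
                                else cwdist (x (pos j)) (x p))
                  | j <- iota 0 n & cw j != cw k] in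
      (dend, omap (fun g : R => Rdiv g (IZR 2)) (minR gaps)) in
    ((s + m) %% n, fun k => rcons (h k) (fb k))
  end.

Definition history A n x o id r (k : nat) : seq obs := (run A n x o id r).2 k.

Definition valid_positions (n : nat) (x : nat -> R) : Prop :=
  Rle 0 (x 0) /\ Rlt (x n.-1) 1 /\ (forall i, i.+1 < n -> Rlt (x i) (x i.+1)).

Definition valid_ids (N n : nat) (id : nat -> nat) : Prop :=
  (forall k, k < n -> 1 <= id k <= N) /\
  (forall k l, k < n -> l < n -> id k = id l -> k = l).

Definition expected (n : nat) (x : nat -> R) (o : nat -> bool) (k : nat)
  : R * R * bool * bool :=
  let kc := k.+1 %% n in
  let kcc := (k + n).-1 %% n in
  let dcw := cwdist (x k) (x kc) in
  let dccw := cwdist (x kcc) (x k) in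
  let Rk := if o k then kc else kcc in
  let Lk := if o k then kcc else kc in
  ((if o k then dcw else dccw), (if o k then dccw else dcw),
   o Rk == o k, o Lk == o k).

(* Agents work in probes of two rounds; in the second round every agent reverses its
   direction of the first one, so after each probe all agents are back at their initial
   positions. When agent a moves towards its side c in a probe, its first collision
   happens at half the distance to its neighbour on side c if that neighbour comes
   towards it, and strictly later otherwise, the neighbour being the unique nearest agent
   on that side. In probe 0 (resp. 1) every agent moves to its own right (resp. left),
   so the neighbour comes towards it exactly when it is oppositely oriented; this yields
   the orientation bits. In probe 2 + 2i + b every agent moves according to bit i of its
   ID, flipped when b = 1: two equally oriented neighbours have IDs differing in some bit
   i < log N + 1, and for one value of b they approach each other. Hence on each side the
   least collision distance over the probes heading to that side is half the distance to
   the neighbour, and 2 (log N + 2) probes suffice. *)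

From Stdlib Require Import Reals Lra FunctionalExtensionality.
From Stdlib Require List.
From mathcomp Require Import all_boot zify.

Set Implicit Arguments.
Unset Strict Implicit.
Unset Printing Implicit Defensive.

Local Open Scope R_scope.

Lemma frac_part_id (r : R) : 0 <= r < 1 -> frac_part r = r.
Proof.
by move=> r01; have [_ <-] := @Int_part_frac_part_spec r 0 r r01 ltac:(simpl; lra).
Qed.

Lemma frac_part_neg (r : R) : -1 < r < 0 -> frac_part r = r + 1.
Proof.
move=> r_neg.
by have [_ <-] := @Int_part_frac_part_spec r (-1) (r + 1) ltac:(lra) ltac:(simpl; lra).
Qed.

Section Positions.
Variables (n : nat) (x : nat -> R).
Hypothesis x_valid : valid_positions n x.

Lemma x_lt i j : (i < j)%N -> (j < n)%N -> x i < x j.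
Proof.
case: x_valid => _ [_ x_step] ij; elim: j ij => [|j IHj] //.
rewrite ltnS leq_eqVlt => /orP[/eqP -> | ij] jn; first exact: x_step.
exact: Rlt_trans (IHj ij (ltnW jn)) (x_step _ jn).
Qed.

Lemma x_le i j : (i <= j)%N -> (j < n)%N -> x i <= x j.
Proof.
rewrite leq_eqVlt => /orP[/eqP -> | ij] jn; first lra.
exact/Rlt_le/x_lt.
Qed.

Lemma x_bounds i : (i < n)%N -> 0 <= x i < 1.
Proof.
case: x_valid => x0 [xlast _] i_n.
have n_pos : (0 < n)%N by apply: leq_ltn_trans i_n.
split; first exact: Rle_trans x0 (x_le (leq0n i) i_n).
apply: Rle_lt_trans xlast; apply: x_le; last by rewrite prednK.
by rewrite -ltnS prednK.
Qed.

Lemma cwdist_lt i j : (i < j)%N -> (j < n)%N -> cwdist (x i) (x j) = x j - x i.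
Proof.
move=> ij jn; rewrite /cwdist frac_part_id //.
have := x_lt ij jn; have := x_bounds (ltn_trans ij jn); have := x_bounds jn; lra.
Qed.

Lemma cwdist_gt i j : (i < j)%N -> (j < n)%N -> cwdist (x j) (x i) = 1 - (x j - x i).
Proof.
move=> ij jn; rewrite /cwdist frac_part_neg; first lra.
have := x_lt ij jn; have := x_bounds (ltn_trans ij jn); have := x_bounds jn; lra.
Qed.

Lemma cwdist_succ_min k l : (k < n)%N -> (l < n)%N -> l != k ->
  cwdist (x k) (x (k.+1 %% n)) <= cwdist (x k) (x l) /\
  (l != k.+1 %% n -> cwdist (x k) (x (k.+1 %% n)) < cwdist (x k) (x l)).
Proof.
move=> kn ln lk.
have [k1n|k1n] := ltnP k.+1 n.
  rewrite (modn_small k1n) (cwdist_lt (ltnSn k) k1n).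
  have := x_bounds k1n; have := x_bounds ln.
  have [lk'|kl] := ltnP l k; first by rewrite (cwdist_gt lk' kn); lra.
  have k_l : (k < l)%N by rewrite ltn_neqAle eq_sym lk.
  rewrite (cwdist_lt k_l ln); have := x_le k_l ln.
  split=> [|l_k1]; first lra.
  have k1l : (k.+1 < l)%N by rewrite ltn_neqAle eq_sym l_k1 k_l.
  have := x_lt k1l ln; lra.
have n_k1 : n = k.+1 by apply/eqP; rewrite eqn_leq k1n kn.
have l_k : (l < k)%N by rewrite ltn_neqAle lk -ltnS -n_k1.
have k_pos : (0 < k)%N := leq_ltn_trans (leq0n l) l_k.
have -> : (k.+1 %% n = 0)%N by rewrite n_k1 modnn.
rewrite (cwdist_gt k_pos kn) (cwdist_gt l_k kn).
have := x_le (leq0n l) ln.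
split=> [|l0]; first lra.
have l_pos : (0 < l)%N by rewrite lt0n.
have := x_lt l_pos ln; lra.
Qed.

Lemma cwdist_pred_min k l : (k < n)%N -> (l < n)%N -> l != k ->
  cwdist (x ((k + n).-1 %% n)%N) (x k) <= cwdist (x l) (x k) /\
  (l != ((k + n).-1 %% n)%N -> cwdist (x ((k + n).-1 %% n)%N) (x k) < cwdist (x l) (x k)).
Proof.
move=> kn ln lk.
have n_pos : (0 < n)%N by apply: leq_ltn_trans kn.
case: k kn lk => [|k] kn lk.
  have n1n : (n.-1 < n)%N by rewrite prednK.
  have l_pos : (0 < l)%N by rewrite lt0n.
  have l_n1 : (l <= n.-1)%N by rewrite -ltnS prednK.
  have n1_pos : (0 < n.-1)%N := leq_trans l_pos l_n1.
  rewrite add0n modn_small // (cwdist_gt n1_pos n1n) (cwdist_gt l_pos ln).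
  have := x_le l_n1 n1n.
  split=> [|l_n1']; first lra.
  have l_lt : (l < n.-1)%N by rewrite ltn_neqAle l_n1' l_n1.
  have := x_lt l_lt n1n; lra.
have k_n : (k < n)%N by apply: ltn_trans kn.
rewrite addSn /= modnDr modn_small // (cwdist_lt (ltnSn k) kn).
have := x_bounds k_n; have := x_bounds ln.
have [l_k1|k1_l] := ltnP l k.+1.
  have l_k : (l <= k)%N by rewrite -ltnS.
  rewrite (cwdist_lt l_k1 kn); have := x_le l_k k_n.
  split=> [|l_k']; first lra.
  have l_lt : (l < k)%N by rewrite ltn_neqAle l_k' l_k.
  have := x_lt l_lt k_n; lra.
have k1l : (k.+1 < l)%N by rewrite ltn_neqAle eq_sym lk k1_l.
rewrite (cwdist_gt k1l ln); split=> [|_]; lra.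
Qed.
End Positions.

Section MinR.

Lemma minR_In t v : minR t = Some v -> List.In v t.
Proof.
case: t => [//|g gs] [<-] /=.
elim: gs => [|a gs IHgs] /=; first by left.
pattern (Rmin a (foldr Rmin g gs)); apply: Rmin_case; first by right; left.
by case: IHgs => ?; [left | right; right].
Qed.

Lemma minR_le t v w : minR t = Some v -> List.In w t -> v <= w.
Proof.
case: t => [//|g gs] [<-]; elim: gs w => [|a gs IHgs] w /=.
  by case=> [<-|[]]; lra.
case=> [<-|[<-|in_gs]]; last 2 first.
- exact: Rmin_l.
- exact: Rle_trans (Rmin_r _ _) (IHgs _ (or_intror in_gs)).
exact: Rle_trans (Rmin_r _ _) (IHgs _ (or_introl erefl)).
Qed.

Lemma minR_least t d : List.In d t -> (forall w, List.In w t -> d <= w) -> minR t = Some d.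
Proof.
move=> d_in d_min; case E: (minR t) => [v|]; last by case: t E d_in d_min.
by have := minR_le E d_in; have := d_min _ (minR_In E) => *; congr Some; lra.
Qed.

Variables (T : eqType) (f : T -> R) (P : pred T) (s : seq T).

Lemma In_map_filter w :
  List.In w [seq f l | l <- s & P l] <-> exists2 l, (l \in s) && P l & w = f l.
Proof.
elim: s => [|a s' IHs] /=; first by split=> [[]|[]].
case Pa: (P a) => /=; rewrite IHs; split.
- case=> [<-|[l /andP[l_in Pl] ->]]; first by exists a; rewrite ?inE ?eqxx.
  by exists l; rewrite // inE l_in orbT.
- case=> l /andP[]; rewrite inE => /orP[/eqP-> _ ->|l_in Pl ->]; first by left.
  by right; exists l; rewrite ?l_in.
- by case=> l /andP[l_in Pl] ->; exists l; rewrite // inE l_in orbT.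
- case=> l /andP[]; rewrite inE => /orP[/eqP->|l_in Pl ->]; first by rewrite Pa.
  by exists l; rewrite ?l_in.
Qed.

Lemma minR_map_filter_ge d v :
  (forall l, l \in s -> P l -> d <= f l) ->
  minR [seq f l | l <- s & P l] = Some v -> d <= v.
Proof.
move=> f_ge /minR_In /In_map_filter[l /andP[l_in Pl] ->]; exact: f_ge.
Qed.

Lemma minR_map_filter_eq (l0 : T) d :
  (forall l, l \in s -> P l -> d <= f l /\ (l != l0 -> d < f l)) ->
  l0 \in s -> f l0 = d ->
  minR [seq f l | l <- s & P l] = Some d <-> P l0.
Proof.
move=> f_ge l0_in fl0; split.
  move/minR_In/In_map_filter=> [l /andP[l_in Pl] d_fl].
  have [<- //|l_l0] := eqVneq l l0.
  by have [_ /(_ l_l0)] := f_ge l l_in Pl; lra.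
move=> Pl0; apply: minR_least.
  by apply/In_map_filter; exists l0; rewrite ?l0_in.
by move=> w /In_map_filter[l /andP[l_in Pl] ->]; case: (f_ge l l_in Pl).
Qed.

End MinR.

Lemma In_pmap (A : eqType) (B : Type) (g : A -> option B) (s : seq A) w :
  List.In w (pmap g s) <-> exists2 a, a \in s & g a = Some w.
Proof.
elim: s => [|a s IHs] /=; first by split=> [[]|[]].
case ga: (g a) => [b|] /=; rewrite IHs; split.
- case=> [<-|[a' a'_in ga']]; first by exists a; rewrite ?mem_head.
  by exists a'; rewrite // inE a'_in orbT.
- case=> a'; rewrite inE => /orP[/eqP->|a'_in ga']; first by rewrite ga => -[]; left.
  by right; exists a'.
- by case=> a' a'_in ga'; exists a'; rewrite // inE a'_in orbT.
- by case=> a'; rewrite inE => /orP[/eqP->|a'_in ga']; [rewrite ga | exists a'].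
Qed.

Section Bits.
Local Open Scope nat_scope.

Definition nat_bit (i a : nat) : bool := odd (a %/ 2 ^ i).

Lemma eq_nat_bits L a b : a < 2 ^ L -> b < 2 ^ L ->
  (forall i, i < L -> nat_bit i a = nat_bit i b) -> a = b.
Proof.
elim: L a b => [|L IHL] a b.
  by rewrite expn0 !ltnS !leqn0 => /eqP-> /eqP->.
move=> aL bL same_bits.
have odd_ab : odd a = odd b by have := same_bits 0 isT; rewrite /nat_bit expn0 !divn1.
rewrite -(odd_double_half a) -(odd_double_half b) odd_ab; congr (_ + _.*2).
apply: IHL; rewrite -?divn2 ?ltn_divLR -?expnSr //.
by move=> i iL; have := same_bits i.+1 iL; rewrite /nat_bit expnS !divnMA !divn2.
Qed.

Lemma exists_nat_bit_neq L a b : a < 2 ^ L -> b < 2 ^ L -> a != b ->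
  exists2 i, i < L & nat_bit i a != nat_bit i b.
Proof.
move=> aL bL a_b.
have [/hasP[i]|/hasPn no_bit] := boolP (has (fun i => nat_bit i a != nat_bit i b) (iota 0 L)).
  by rewrite mem_iota; exists i.
case/negP: a_b; apply/eqP/(eq_nat_bits aL bL) => i iL.
by apply/eqP/negbNE/no_bit; rewrite mem_iota.
Qed.

End Bits.

Definition probe_dir (j a : nat) : bool :=
  match j with
  | 0 => true
  | 1 => false
  | j'.+2 => nat_bit j'./2 a (+) odd j'
  end.

Definition round_dir (r a : nat) : bool := probe_dir r./2 a (+) odd r.

Definition probe_collision (h : seq obs) (j : nat) : option R := (nth (R0, None) h j.*2).2.

Definition collides_at (h : seq obs) (j : nat) (v : R) : bool :=
  if probe_collision h j is Some u then (if Req_EM_T u v then true else false) else false.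

Definition nearest_collision (P a : nat) (h : seq obs) (c : bool) : option R :=
  minR (pmap (probe_collision h) [seq j <- iota 0 P | probe_dir j a == c]).

Definition discovery (P : nat) : algorithm :=
  Algorithm (fun a h => round_dir (size h) a)
    (fun a h =>
       let dR := odflt R0 (nearest_collision P a h true) in
       let dL := odflt R0 (nearest_collision P a h false) in
       (2 * dR, 2 * dL, ~~ collides_at h 0 dR, ~~ collides_at h 1 dL)).

Lemma collides_atP h j v : reflect (probe_collision h j = Some v) (collides_at h j v).
Proof.
rewrite /collides_at; case: (probe_collision h j) => [u|]; last by constructor.
by case: Req_EM_T => [u_v|u_v]; constructor; [rewrite u_v | case].
Qed.

Definition round_shift (n : nat) (cw : nat -> bool) : nat :=
  ((count cw (iota 0 n) + (n - count (fun k => ~~ cw k) (iota 0 n))) %% n)%N.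

Definition round_obs (n : nat) (x : nat -> R) (o cw : nat -> bool) (s k : nat) : obs :=
  let pos k := ((k + s) %% n)%N in
  let p := pos k in
  let q := ((p + round_shift n cw) %% n)%N in
  let dend := if o k then cwdist (x p) (x q) else cwdist (x q) (x p) in
  let gaps := [seq (if cw k then cwdist (x p) (x (pos j)) else cwdist (x (pos j)) (x p))
              | j <- iota 0 n & cw j != cw k] in
  (dend, omap (fun g : R => Rdiv g (IZR 2)) (minR gaps)).

Lemma round_shift_count n cw : round_shift n cw = ((count cw (iota 0 n)).*2 %% n)%N.
Proof.
rewrite /round_shift; have := count_predC cw (iota 0 n).
rewrite size_iota /predC /=; set a := count _ _; set b := count _ _.
by move=> count_n; congr (_ %% n); lia.
Qed.

Section Run.
Variables (P n : nat) (x : nat -> R) (o : nat -> bool) (id : nat -> nat).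
Let A := discovery P.
Local Open Scope nat_scope.

Definition offset (r : nat) : nat := (run A n x o id r).1.
Definition cw_at (r k : nat) : bool := round_dir r (id k) == o k.

Lemma size_history r k : size (history A n x o id r k) = r.
Proof.
elim: r k => [|r IHr] k //; rewrite /history /=.
by case E: (run A n x o id r) => [s h] /=; rewrite size_rcons -[h]/((s, h).2) -E IHr.
Qed.

Lemma run_succ r : run A n x o id r.+1 =
  ((offset r + round_shift n (cw_at r)) %% n,
   fun k => rcons (history A n x o id r k) (round_obs n x o (cw_at r) (offset r) k)).
Proof.
have cw_r : (fun k => round_dir (size ((run A n x o id r).2 k)) (id k) == o k) = cw_at r.
  by apply: functional_extensionality => k; have := size_history r k; rewrite /history => ->.
rewrite /= /offset /history -cw_r; by case: (run A n x o id r).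
Qed.

Lemma offset_succ r : offset r.+1 = (offset r + round_shift n (cw_at r)) %% n.
Proof. by rewrite {1}/offset run_succ. Qed.

Lemma nth_history r r' k d : r < r' ->
  nth d (history A n x o id r' k) r = round_obs n x o (cw_at r) (offset r) k.
Proof.
elim: r' => [//|r' IHr'] r_r'; rewrite {1}/history run_succ /= nth_rcons size_history.
move: r_r'; rewrite ltnS leq_eqVlt => /orP[/eqP->|r_lt]; first by rewrite ltnn eqxx.
by rewrite r_lt IHr'.
Qed.

Lemma cw_at_odd j k : cw_at j.*2.+1 k = ~~ cw_at j.*2 k.
Proof.
rewrite /cw_at /round_dir /= odd_double uphalf_double doubleK.
by case: (probe_dir j (id k)); case: (o k).
Qed.

Lemma offset_even j : 0 < n -> offset j.*2 = 0.
Proof.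
move=> n_pos; elim: j => [//|j IHj].
rewrite doubleS !offset_succ IHj add0n !round_shift_count.
have -> : count (cw_at j.*2.+1) (iota 0 n) = count (predC (cw_at j.*2)) (iota 0 n).
  by apply: eq_count => k; rewrite cw_at_odd.
have := count_predC (cw_at j.*2) (iota 0 n); rewrite size_iota => count_n.
by rewrite modnDml modnDm -doubleD count_n -mul2n modnMl.
Qed.

Lemma nth_history_probe T j k d : 0 < n -> j.*2 < T ->
  nth d (history A n x o id T k) j.*2 = round_obs n x o (cw_at j.*2) 0 k.
Proof. by move=> n_pos jT; rewrite nth_history // offset_even. Qed.

End Run.

Section Discovery.
Variables (N n L : nat) (x : nat -> R) (o : nat -> bool) (id : nat -> nat).
Hypotheses (n_gt1 : (1 < n)%N) (x_valid : valid_positions n x).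
Hypotheses (id_valid : valid_ids N n id) (N_lt : (N < 2 ^ L)%N).
Variable k : nat.
Hypothesis k_n : (k < n)%N.

Let P := L.+1.*2.
Let h := history (discovery P) n x o id P.*2 k.
Let probe_cw (j l : nat) : bool := cw_at o id j.*2 l.

Definition neighbour (c : bool) : nat :=
  if c == o k then (k.+1 %% n)%N else ((k + n).-1 %% n)%N.

Definition neighbour_dist (c : bool) : R :=
  if c == o k then cwdist (x k) (x (neighbour c)) else cwdist (x (neighbour c)) (x k).

Definition probe_gap (j l : nat) : R :=
  if probe_cw j k then cwdist (x k) (x l) else cwdist (x l) (x k).

Lemma probe_cw_dir j l : probe_cw j l = (probe_dir j (id l) == o l).
Proof. by rewrite /probe_cw /cw_at /round_dir odd_double doubleK addbF. Qed.

Lemma neighbour_lt c : (neighbour c < n)%N.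
Proof. by rewrite /neighbour; case: (c == o k); rewrite ltn_pmod // ltnW. Qed.

Lemma neighbour_neq c : neighbour c != k.
Proof.
have n_pos : (0 < n)%N by apply: ltnW.
rewrite /neighbour; case: (c == o k).
  have [k1n|k1n] := ltnP k.+1 n; first by rewrite modn_small // gtn_eqF.
  have n_k1 : n = k.+1 by apply/eqP; rewrite eqn_leq k1n k_n.
  by rewrite n_k1 modnn eq_sym -lt0n -ltnS -n_k1.
case: k k_n => [|k'] k'_n.
  by rewrite add0n modn_small ?prednK // -lt0n -ltnS prednK.
by rewrite addSn /= modnDr modn_small ?ltn_eqF // ltnW.
Qed.

Lemma probe_gap_neighbour j :
  probe_gap j (neighbour (probe_dir j (id k))) = neighbour_dist (probe_dir j (id k)).
Proof. by rewrite /probe_gap /neighbour_dist probe_cw_dir. Qed.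

Lemma probe_gap_min j l : (l < n)%N -> l != k ->
  let c := probe_dir j (id k) in
  neighbour_dist c <= probe_gap j l /\ (l != neighbour c -> neighbour_dist c < probe_gap j l).
Proof.
move=> ln lk c; rewrite /probe_gap /neighbour_dist /neighbour probe_cw_dir -/c.
case: (c == o k); [exact: cwdist_succ_min | exact: cwdist_pred_min].
Qed.

Lemma probe_collision_gaps j : (j < P)%N ->
  probe_collision h j = omap (fun g => g / 2)
    (minR [seq probe_gap j l | l <- iota 0 n & probe_cw j l != probe_cw j k]).
Proof.
move=> jP; rewrite /probe_collision nth_history_probe ?ltn_double ?(ltnW n_gt1) //=.
rewrite addn0 (modn_small k_n); congr (omap _ (minR _)).
apply/eq_in_map => l; rewrite mem_filter mem_iota add0n => /andP[_ ln].
by rewrite /probe_gap addn0 modn_small.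
Qed.

Lemma probe_collision_ge j v : (j < P)%N ->
  probe_collision h j = Some v -> neighbour_dist (probe_dir j (id k)) / 2 <= v.
Proof.
move=> jP; rewrite probe_collision_gaps //; case E: (minR _) => [g|] //= [<-].
suff : neighbour_dist (probe_dir j (id k)) <= g by lra.
apply: minR_map_filter_ge E => l; rewrite mem_iota add0n => /andP[_ ln] cw_l.
have l_k : l != k by apply: contraNneq cw_l => ->.
by case: (probe_gap_min j ln l_k).
Qed.

Lemma probe_collision_neighbour j : (j < P)%N ->
  let c := probe_dir j (id k) in
  probe_collision h j = Some (neighbour_dist c / 2) <->
  probe_cw j (neighbour c) != probe_cw j k.
Proof.
move=> jP /=; rewrite probe_collision_gaps //.
apply: iff_trans (minR_map_filter_eq
  (s := iota 0 n) (P := fun l => probe_cw j l != probe_cw j k) _ _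
  (probe_gap_neighbour j)).
- case: (minR _) => [g|] /=; split=> // -[g_eq]; congr Some; lra.
- move=> l; rewrite mem_iota add0n => /andP[_ ln] cw_l; apply: probe_gap_min => //.
  by apply: contraNneq cw_l => ->.
- by rewrite mem_iota add0n neighbour_lt.
Qed.

Lemma exists_probe_toward c :
  exists2 j, (j < P)%N & probe_dir j (id k) = c /\ probe_cw j (neighbour c) != probe_cw j k.
Proof.
have [ids_bounded id_inj] := id_valid.
have id_lt l : (l < n)%N -> (id l < 2 ^ L)%N.
  by move=> ln; case/andP: (ids_bounded l ln) => _ /leq_ltn_trans; apply.
set l := neighbour c; have ln : (l < n)%N := neighbour_lt c.
have l_k : l != k := neighbour_neq c; clearbody l.
have [o_lk|o_lk] := eqVneq (o l) (o k); last first.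
  exists (~~ c : nat); first by case: c.
  by rewrite !probe_cw_dir; case: c; case: (o k) o_lk; case: (o l).
have id_lk : id k != id l.
  by apply: contra_neq l_k => /(id_inj _ _ k_n ln).
have [i iL bit_neq] := exists_nat_bit_neq (id_lt _ k_n) (id_lt _ ln) id_lk.
(* In probe 2 + 2i + b, with b making agent k head to side c, the neighbour heads the other way. *)
exists (nat_bit i (id k) (+) c + i.*2).+2.
  by rewrite /P; case: (_ (+) _) => /=; lia.
rewrite !probe_cw_dir /= oddD odd_double addbF half_bit_double o_lk.
by move: bit_neq; case: (nat_bit i (id k)); case: (nat_bit i (id l)); case: c; case: (o k).
Qed.

Lemma nearest_collision_neighbour c :
  nearest_collision P (id k) h c = Some (neighbour_dist c / 2).
Proof.
apply: minR_least.
  apply/In_pmap; have [j jP [dir_j toward]] := exists_probe_toward c.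
  exists j; first by rewrite mem_filter dir_j eqxx mem_iota.
  by rewrite -dir_j; apply/probe_collision_neighbour; rewrite ?dir_j.
move=> w /In_pmap[j]; rewrite mem_filter mem_iota add0n => /andP[/eqP<- /andP[_ jP]].
exact: probe_collision_ge.
Qed.

Lemma collides_at_neighbour c :
  collides_at h (~~ c) (neighbour_dist c / 2) = (o (neighbour c) != o k).
Proof.
have eq_c a b : ((c == a) != (c == b)) = (a != b) by case: c; case: a; case: b.
have dir_c a : probe_dir (~~ c) a = c by destruct c.
have jP : (~~ c < P)%N by destruct c.
have := probe_collision_neighbour jP; rewrite /= !probe_cw_dir !dir_c eq_c => coll_iff.
by apply/collides_atP/idP => /coll_iff.
Qed.

Lemma discovery_correct : output (discovery P) (id k) h = expected n x o k.
Proof.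
rewrite /= !nearest_collision_neighbour /= -[0%N]/(nat_of_bool (~~ true)).
rewrite -[1%N]/(nat_of_bool (~~ false)) !collides_at_neighbour !negbK.
have half r : 2 * (r / 2) = r by field.
by rewrite !half /expected /neighbour_dist /neighbour; case: (o k).
Qed.

End Discovery.

Local Close Scope R_scope.

Theorem proposition5 :
  exists c : nat, forall N : nat,
  exists (T : nat) (A : algorithm),
    T <= c * trunc_log 2 N /\
    forall (n : nat) (x : nat -> R) (o : nat -> bool) (id : nat -> nat),
      4 < n -> n <= N -> valid_positions n x -> valid_ids N n id ->
      forall k, k < n -> output A (id k) (history A n x o id T k) = expected n x o k.
Proof.
exists 8 => N; have [N_lt5|N_ge5] := ltnP N 5.
  by exists 0, (discovery 0); split=> // n x o id n_gt4 n_N; lia.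
set L := (trunc_log 2 N).+1.
exists L.+1.*2.*2, (discovery L.+1.*2); split.
  have : 2 <= trunc_log 2 N by apply: trunc_log_max => //; apply: leq_trans N_ge5.
  by rewrite /L; lia.
move=> n x o id n_gt4 _ x_valid id_valid k k_n.
apply: (discovery_correct o _ x_valid id_valid _ k_n); first exact: ltn_trans n_gt4.
exact: trunc_log_ltn.
Qed.
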